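(* The worst-case time complexity of the algorithm Classifier on an input configuration $G$ with $n$ nodes is $O(n^3\Delta)$, where $\Delta$ is the maximum degree of $G$.
   Context: A configuration is a finite simple undirected connected graph $G$ with $n$ nodes, each node $v$ having a non-negative integer wakeup tag $t_v$; the span $\sigma$ is the largest tag (the smallest tag being $0$). Algorithm Classifier (centralized, input $G$). It maintains a partition of the nodes into classes, with $\mathrm{class}(v)\in\{1,\ldots,\mathit{numClasses}\}$. Initially all nodes are in class $1$ and $\mathit{numClasses}=1$. One iteration does: for each node $v$, build a list $N_v$ of triples by scanning the neighbours $w$ of $v$: if $\mathrm{class}(w)\ne\mathrm{class}(v)$ or $t_w\ne t_v$, then if a triple with first two coordinates $(\mathrm{class}(w),\sigma+1+t_w-t_v)$ is already in $N_v$ its third coordinate is set to $*$, otherwise $(\mathrm{class}(w),\sigma+1+t_w-t_v,1)$ is appended; $N_v$ is sorted lexicographically (with $1$ before $*$) and concatenated into the label $L_v$. Then the partition is refined by comparing each node in turn with one representative of each existing class: two nodes end up in the same class iff they were in the same class before the iteration and have equal labels; nodes matching no representative start a new class (incrementing $\mathit{numClasses}$). Main loop: for $i=1,\ldots,\lceil n/2\rceil$: let $\mathit{old}=\mathit{numClasses}$; perform one iteration; if some class contains exactly one node, output ''Yes'' and stop; otherwise, if $\mathit{numClasses}=\mathit{old}$, output ''No'' and stop. *)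

(* A cost-instrumented model of Algorithm Classifier:
   every function returns its result together with the number of
   elementary steps (unit-cost RAM model) it performs. *)
From mathcomp Require Import all_boot.

Set Implicit Arguments.
Unset Strict Implicit.
Unset Printing Implicit Defensive.

(* A triple (class, offset, star): star = false encodes the third
   coordinate 1, star = true encodes '*'. *)
Definition triple := (nat * nat * bool)%type.

Definition triple_le (x y : triple) : bool :=
  (x.1.1 < y.1.1) ||
  ((x.1.1 == y.1.1) && ((x.1.2 < y.1.2) || ((x.1.2 == y.1.2) && (x.2 <= y.2)))).

Fixpoint ins_triple (c d : nat) (l : seq triple) : seq triple * nat :=
  match l with
  | [::] => ([:: (c, d, false)], 1)
  | x :: l' =>
      if (x.1.1 == c) && (x.1.2 == d) then ((c, d, true) :: l', 1)
      else let: (l'', k) := ins_triple c d l' in (x :: l'', k.+1)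
  end.

Fixpoint insert_sorted (x : triple) (l : seq triple) : seq triple * nat :=
  match l with
  | [::] => ([:: x], 1)
  | y :: l' =>
      if triple_le x y then (x :: l, 1)
      else let: (l'', k) := insert_sorted x l' in (y :: l'', k.+1)
  end.

Fixpoint isort (l : seq triple) : seq triple * nat :=
  match l with
  | [::] => ([::], 1)
  | x :: l' =>
      let: (s, k) := isort l' in
      let: (s', k') := insert_sorted x s in (s', k + k')
  end.

Fixpoint label_eq (l1 l2 : seq triple) : bool * nat :=
  match l1, l2 with
  | [::], [::] => (true, 1)
  | x :: l1', y :: l2' =>
      if x == y then let: (b, k) := label_eq l1' l2' in (b, k.+1)
      else (false, 1)
  | _, _ => (false, 1)
  end.

Section Classifier.

Variables (n : nat) (e : rel 'I_n) (t : 'I_n -> nat).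

Definition neighbors (v : 'I_n) : seq 'I_n := [seq w <- ord_enum n | e v w].

Definition max_degree : nat := foldr maxn 0 [seq size (neighbors v) | v <- ord_enum n].

Definition span : nat := foldr maxn 0 [seq t v | v <- ord_enum n].

Definition is_configuration : Prop :=
  symmetric e /\ irreflexive e /\ (forall x y : 'I_n, connect e x y) /\
  exists v : 'I_n, t v = 0.

Definition build_N (cls : 'I_n -> nat) (v : 'I_n) : seq triple * nat :=
  foldl (fun (acc : seq triple * nat) (w : 'I_n) =>
           let: (l, k) := acc in
           if (cls w != cls v) || (t w != t v) then
             let: (l', k') := ins_triple (cls w) (span + 1 + t w - t v) l in
             (l', k + k' + 1)
           else (l, k + 1))
        ([::], 1) (neighbors v).

Definition label (cls : 'I_n -> nat) (v : 'I_n) : seq triple * nat :=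
  let: (l, k) := build_N cls v in
  let: (s, k') := isort l in (s, k + k').

(* Compare v with the representatives reps (the j-th representative,
   0-based, stands for new class j+1); returns the index of the first
   matching representative. *)
Fixpoint find_rep (oldcls : 'I_n -> nat) (lab : 'I_n -> seq triple)
    (v : 'I_n) (reps : seq 'I_n) (j : nat) : option nat * nat :=
  match reps with
  | [::] => (None, 1)
  | r :: rs =>
      let: (b, k) := label_eq (lab v) (lab r) in
      if (oldcls v == oldcls r) && b then (Some j, k.+1)
      else let: (o, k') := find_rep oldcls lab v rs j.+1 in (o, k + k'.+1)
  end.

Definition upd (f : 'I_n -> nat) (v : 'I_n) (c : nat) : 'I_n -> nat :=
  fun w => if w == v then c else f w.

Definition refine (oldcls : 'I_n -> nat) (lab : 'I_n -> seq triple)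
    : seq 'I_n * ('I_n -> nat) * nat :=
  foldl (fun (st : seq 'I_n * ('I_n -> nat) * nat) (v : 'I_n) =>
           let: (reps, ncls, k) := st in
           let: (o, k') := find_rep oldcls lab v reps 0 in
           match o with
           | Some j => (reps, upd ncls v j.+1, k + k' + 1)
           | None => (rcons reps v, upd ncls v (size reps).+1, k + k' + 1)
           end)
        ([::], (fun _ => 0), 1) (ord_enum n).

Definition iteration (cls : 'I_n -> nat) : ('I_n -> nat) * nat * nat :=
  let lab := fun v => (label cls v).1 in
  let klab := sumn [seq (label cls v).2 | v <- ord_enum n] in
  let: (reps, ncls, k) := refine cls lab in
  (ncls, size reps, klab + k).

Definition has_singleton (cls : 'I_n -> nat) (numC : nat) : bool * nat :=
  (has (fun c => count (fun v => cls v == c) (ord_enum n) == 1) (iota 1 numC),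
   numC * n + 1).

(* Main loop, with fuel = number of remaining loop indices.
   Output: Some true = "Yes", Some false = "No", None = loop exhausted. *)
Fixpoint main_loop (fuel : nat) (cls : 'I_n -> nat) (numC : nat)
    : option bool * nat :=
  match fuel with
  | 0 => (None, 1)
  | fuel'.+1 =>
      let: (cls', numC', k) := iteration cls in
      let: (b, k2) := has_singleton cls' numC' in
      if b then (Some true, k + k2 + 1)
      else if numC' == numC then (Some false, k + k2 + 1)
      else let: (o, k3) := main_loop fuel' cls' numC' in (o, k + k2 + k3 + 1)
  end.

(* The whole algorithm: initialisation (all nodes in class 1, computing the
   span costs n steps), then loop for i = 1 .. ceil(n/2). *)
Definition classifier : option bool * nat :=
  let: (o, k) := main_loop (uphalf n) (fun _ => 1) 1 in (o, k + n + 1).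

Definition classifier_cost : nat := classifier.2.

End Classifier.

From mathcomp Require Import all_boot zify.

Set Implicit Arguments.
Unset Strict Implicit.
Unset Printing Implicit Defensive.

(* Every label has at most Δ entries, so building it (insertion into N_v, then
   insertion sort) costs O(Δ^2) per node and comparing two labels costs O(Δ).
   The refinement compares each of the n nodes with at most n representatives,
   hence one iteration costs O(nΔ^2 + n^2 Δ) = O(n^2 Δ) because Δ <= n, and the
   singleton test costs O(n^2).  There are at most ⌈n/2⌉ iterations.  Finally a
   connected graph on at least two nodes has Δ >= 1, which absorbs all the
   additive constants into O(n^3 Δ). *)

Lemma size_ord_enum n : size (ord_enum n) = n.
Proof. by rewrite -(size_map val) val_ord_enum size_iota. Qed.

Lemma sumn_map_le (T : Type) (f : T -> nat) (s : seq T) c :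
  (forall x, f x <= c) -> sumn (map f s) <= size s * c.
Proof. by move=> le_f; elim: s => //= x s IH; rewrite mulSn leq_add. Qed.

Section FoldlCost.

Variables (S A : Type) (f : S -> A -> S) (sz cost : S -> nat) (a b : nat).
Hypothesis size_step : forall s x, sz (f s x) <= (sz s).+1.
Hypothesis cost_step : forall s x, cost (f s x) <= cost s + a * sz s + b.

Lemma foldl_size_le xs s : sz (foldl f s xs) <= sz s + size xs.
Proof.
elim: xs s => [|x xs IH] s /=; first by rewrite addn0.
by apply: leq_trans (IH _) _; rewrite addnS -addSn leq_add2r size_step.
Qed.

Lemma foldl_cost_le xs s :
  cost (foldl f s xs) <= cost s + size xs * (a * (sz s + size xs) + b).
Proof.
elim: xs s => [|x xs IH] s /=; first exact: leq_addr.
have le_sz : sz (f s x) + size xs <= sz s + (size xs).+1.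
  by rewrite addnS -addSn leq_add2r size_step.
apply: leq_trans (IH _) _; rewrite mulSn addnA leq_add //.
  apply: leq_trans (cost_step s x) _.
  by rewrite -addnA leq_add2l leq_add2r leq_mul2l leq_addr orbT.
by rewrite leq_mul2l leq_add2r leq_mul2l le_sz !orbT.
Qed.

End FoldlCost.

Lemma size_ins_triple c d l : size (ins_triple c d l).1 <= (size l).+1.
Proof.
elim: l => [|x l IH] //=; case: ifP => _ //.
by case: (ins_triple c d l) IH.
Qed.

Lemma ins_triple_cost c d l : (ins_triple c d l).2 <= (size l).+1.
Proof.
elim: l => [|x l IH] //=; case: ifP => _ //.
by case: (ins_triple c d l) IH.
Qed.

Lemma size_insert_sorted x l : size (insert_sorted x l).1 = (size l).+1.
Proof.
elim: l => [|y l IH] //=; case: ifP => _ //.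
by case: (insert_sorted x l) IH => s k /= ->.
Qed.

Lemma insert_sorted_cost x l : (insert_sorted x l).2 <= (size l).+1.
Proof.
elim: l => [|y l IH] //=; case: ifP => _ //.
by case: (insert_sorted x l) IH.
Qed.

Lemma size_isort l : size (isort l).1 = size l.
Proof.
elim: l => [|x l IH] //=; case: (isort l) IH => s k /= <-.
by case: (insert_sorted x s) (size_insert_sorted x s) => s' k' /= ->.
Qed.

Lemma isort_cost l : (isort l).2 <= 1 + size l * (size l).+1.
Proof.
elim: l => [|x l IH] //=.
case: (isort l) (size_isort l) IH => s k /= size_s le_k.
case: (insert_sorted x s) (insert_sorted_cost x s) => s' k' /=; nia.
Qed.

Lemma label_eq_cost l1 l2 : (label_eq l1 l2).2 <= (size l1).+1.
Proof.
elim: l1 l2 => [|x l1 IH] [|y l2] //=; case: ifP => _ //.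
by case: (label_eq l1 l2) (IH l2).
Qed.

Lemma max_degreeE n (e : rel 'I_n) :
  max_degree e = \max_(v <- ord_enum n) size (neighbors e v).
Proof. by rewrite /max_degree foldr_map unlock. Qed.

Lemma max_degree_gt0 n (e : rel 'I_n) :
  1 < n -> (forall x y, connect e x y) -> 0 < max_degree e.
Proof.
case: n e => [|[|m]] // e _ connected_e.
have /connectP[[|z p] /=] := connected_e ord0 (Ordinal (isT : 1 < m.+2)).
  by move=> _ /(congr1 val).
case/andP => e0z _ _; rewrite max_degreeE.
apply: leq_trans (leq_bigmax_seq _ (mem_ord_enum ord0) isT).
by rewrite /neighbors size_filter -has_count; apply/hasP; exists z; rewrite ?mem_ord_enum.
Qed.

Section ClassifierCost.

Variables (n : nat) (e : rel 'I_n) (t : 'I_n -> nat).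
Local Notation Δ := (max_degree e).

Lemma size_neighbors_le v : size (neighbors e v) <= Δ.
Proof. by rewrite max_degreeE; apply: leq_bigmax_seq (mem_ord_enum v) _. Qed.

Lemma max_degree_le : Δ <= n.
Proof.
rewrite max_degreeE; apply/bigmax_leqP_seq => v _ _.
by rewrite /neighbors size_filter (leq_trans (count_size _ _)) ?size_ord_enum.
Qed.

Lemma build_N_bounds cls v :
  size (build_N e t cls v).1 <= Δ /\ (build_N e t cls v).2 <= 1 + Δ * (Δ + 2).
Proof.
rewrite /build_N; set F := fun _ _ => _.
have size_step acc w : size (F acc w).1 <= (size acc.1).+1.
  case: acc => l k; rewrite /F; case: ifP => _ //=.
  move: (cls w) (_ + _ - _) => c d.
  by case: (ins_triple c d l) (size_ins_triple c d l).
have cost_step acc w : (F acc w).2 <= acc.2 + 1 * size acc.1 + 2.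
  case: acc => l k; rewrite /F; case: ifP => _ /=; last lia.
  move: (cls w) (_ + _ - _) => c d.
  case: (ins_triple c d l) (ins_triple_cost c d l) => l' k' /=; lia.
have := foldl_size_le size_step (neighbors e v) ([::], 1).
have := foldl_cost_le size_step cost_step (neighbors e v) ([::], 1).
have := size_neighbors_le v; rewrite /=; nia.
Qed.

Lemma label_bounds cls v :
  size (label e t cls v).1 <= Δ /\ (label e t cls v).2 <= 2 + Δ * (2 * Δ + 3).
Proof.
rewrite /label; case: (build_N e t cls v) (build_N_bounds cls v) => l k /= [size_l le_k].
case: (isort l) (size_isort l) (isort_cost l) => s k' /= -> le_k'; split=> //; nia.
Qed.

Lemma find_rep_cost cls (lab : 'I_n -> seq triple) v reps j S :
  size (lab v) <= S -> (find_rep cls lab v reps j).2 <= size reps * (S + 2) + 1.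
Proof.
move=> size_lab; elim: reps j => [|r reps IH] j //=.
case: (label_eq (lab v) (lab r)) (label_eq_cost (lab v) (lab r)) => b k /= le_k.
case: ifP => _ /=; first nia.
case: (find_rep cls lab v reps j.+1) (IH j.+1) => o k' /=; nia.
Qed.

Lemma refine_bounds cls (lab : 'I_n -> seq triple) S :
  (forall v, size (lab v) <= S) ->
  size (refine cls lab).1.1 <= n /\ (refine cls lab).2 <= 1 + n * (n * (S + 2) + 2).
Proof.
move=> size_lab; rewrite /refine; set F := fun _ _ => _.
have size_step st v : size (F st v).1.1 <= (size st.1.1).+1.
  case: st => [[reps ncls] k]; rewrite /F.
  by case: (find_rep cls lab v reps 0) => [[j|] k'] //=; rewrite size_rcons.
have cost_step st v : (F st v).2 <= st.2 + (S + 2) * size st.1.1 + 2.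
  case: st => [[reps ncls] k]; rewrite /F.
  case: (find_rep cls lab v reps 0) (find_rep_cost cls reps 0 (size_lab v)).
  by case=> [j|] k' /=; nia.
have := foldl_size_le size_step (ord_enum n) ([::], fun _ => 0, 1).
have := foldl_cost_le size_step cost_step (ord_enum n) ([::], fun _ => 0, 1).
rewrite size_ord_enum /=; nia.
Qed.

Lemma iteration_num_classes_le cls : (iteration e t cls).1.2 <= n.
Proof.
rewrite /iteration.
have [] := refine_bounds cls (fun v => (label_bounds cls v).1).
by case: refine => [[reps ncls] k].
Qed.

Hypothesis max_degree_pos : 0 < Δ.

Lemma iteration_cost_le cls : (iteration e t cls).2 <= 13 * n ^ 2 * Δ.
Proof.
rewrite /iteration.
have := sumn_map_le (ord_enum n) (fun v => (label_bounds cls v).2).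
rewrite size_ord_enum => labels_cost.
have [_] := refine_bounds cls (fun v => (label_bounds cls v).1).
case: refine => [[reps ncls] k] /= le_k.
have := max_degree_le; nia.
Qed.

Lemma main_loop_cost_le fuel cls numC :
  (main_loop e t fuel cls numC).2 <= 1 + fuel * (16 * n ^ 2 * Δ).
Proof.
elim: fuel cls numC => [|fuel IH] cls numC //=.
have := iteration_num_classes_le cls; have := iteration_cost_le cls.
case: (iteration e t cls) => [[cls' numC'] k] /= le_k le_numC'.
have round_cost : k + (numC' * n + 1) + 1 <= 16 * n ^ 2 * Δ.
  have n_pos : 0 < n := leq_trans max_degree_pos max_degree_le.
  have : 0 < n ^ 2 * Δ by rewrite muln_gt0 expn_gt0 n_pos max_degree_pos.
  have : numC' * n <= n ^ 2 * Δ by nia.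
  lia.
case: ifP => _ /=; first lia.
case: ifP => _ /=; first lia.
case: (main_loop e t fuel cls' numC') (IH cls' numC') => o k' /=; lia.
Qed.

Lemma classifier_cost_le : classifier_cost e t <= 19 * n ^ 3 * Δ.
Proof.
rewrite /classifier_cost /classifier.
case: main_loop (main_loop_cost_le (uphalf n) (fun _ => 1) 1) => o k /= le_k.
have : uphalf n <= n by rewrite leq_uphalf_double -addnn leq_addr.
have := max_degree_le; nia.
Qed.

End ClassifierCost.

Theorem lemma2 :
  exists c N : nat, forall (n : nat) (e : rel 'I_n) (t : 'I_n -> nat),
    N <= n -> is_configuration e t ->
    classifier_cost e t <= c * n ^ 3 * max_degree e.
Proof.
exists 19, 2 => n e t n_ge2 [_ [_ [connected_e _]]].
exact: classifier_cost_le (max_degree_gt0 n_ge2 connected_e).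
Qed.
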